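(* Let $\mathbf{k}$ be a perfect field and $L/\mathbf{k}$ a quadratic extension. (1) Let $p\in\mathcal{Q}^L$ be a point of degree $2$ whose geometric components are not on the same ruling of $\mathcal{Q}^L_{\overline{\mathbf{k}}}\simeq\mathbb{P}^1_{\overline{\mathbf{k}}}\times\mathbb{P}^1_{\overline{\mathbf{k}}}$ and whose splitting field is $L$. Then there exists $\alpha\in\operatorname{Aut}_{\mathbf{k}}(\mathcal{Q}^L)$ such that $\alpha(p)=\{([1:0],[0:1]),([0:1],[1:0])\}$. (2) Let $r,s\in\mathcal{Q}^L(\mathbf{k})$ be two rational points not contained in the same ruling of $\mathcal{Q}^L_{\overline{\mathbf{k}}}$. Then there exists $\alpha\in\operatorname{Aut}_{\mathbf{k}}(\mathcal{Q}^L)$ such that $\alpha(r)=([1:0],[1:0])$ and $\alpha(s)=([0:1],[0:1])$.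
   Context: With $g$ the generator of $\operatorname{Gal}(L/\mathbf{k})$, $\mathcal{Q}^L$ is the $\mathbf{k}$-structure on $\mathbb{P}^1_L\times\mathbb{P}^1_L$ given by the Galois action $([u_0:u_1],[v_0:v_1])\mapsto([v_0^g:v_1^g],[u_0^g:u_1^g])$; points are written in the coordinates of $\mathbb{P}^1_L\times\mathbb{P}^1_L$. A point of degree $d$ is a Galois orbit of cardinality $d$ of $\overline{\mathbf{k}}$-points, its geometric components being the points of the orbit; its splitting field is the smallest normal extension over which all of them are defined. ''Two points are on the same ruling'' means they lie on a common fibre of one of the two projections of $\mathbb{P}^1\times\mathbb{P}^1$. *)

From HB Require Import structures.
From mathcomp Require Import all_boot all_order all_algebra.
Set Implicit Arguments. Unset Strict Implicit. Unset Printing Implicit Defensive.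
Import Order.TTheory GRing.Theory Num.Theory.
Local Open Scope ring_scope.

(* L is a field, g a field automorphism of L of order
   exactly 2 (the generator of Gal(L/k)), k = fixed field of g.
   A point of P^1_L is a nonzero vector (u0,u1) in L^2, up to scaling.
   A point of P^1_L x P^1_L is a pair of such vectors. *)

Section QL.
Variable L : fieldType.

Definition vec2 := (L * L)%type.
Definition pt := (vec2 * vec2)%type.

Definition nz (u : vec2) : bool := (u.1 != 0) || (u.2 != 0).
Definition is_pt (x : pt) : bool := nz x.1 && nz x.2.

Definition peq (u v : vec2) : bool := u.1 * v.2 == u.2 * v.1.
Definition pteq (x y : pt) : bool := peq x.1 y.1 && peq x.2 y.2.

Variable g : L -> L.
Definition vconj (u : vec2) : vec2 := (g u.1, g u.2).
(* the twisted Galois action defining Q^L: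
   ([u0:u1],[v0:v1]) |-> ([v0^g:v1^g],[u0^g:u1^g]) *)
Definition sigma (x : pt) : pt := (vconj x.2, vconj x.1).

Definition e0 : vec2 := (1, 0).
Definition e1 : vec2 := (0, 1).

(* Automorphisms of P^1_L x P^1_L: (A,B) in GL2 x GL2, optionally composed
   with the swap of factors. *)
Record autPP := AutPP { aA : 'M[L]_2; aB : 'M[L]_2; aswap : bool }.

Definition mxapp (M : 'M[L]_2) (u : vec2) : vec2 :=
  (M ord0 ord0 * u.1 + M ord0 ord_max * u.2,
   M ord_max ord0 * u.1 + M ord_max ord_max * u.2).

Definition act (a : autPP) (x : pt) : pt :=
  if aswap a then (mxapp (aA a) x.2, mxapp (aB a) x.1)
  else (mxapp (aA a) x.1, mxapp (aB a) x.2).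

(* alpha is in Aut_k(Q^L): an automorphism of P^1_L x P^1_L commuting with the
   twisted Galois action sigma. *)
Definition is_kaut (a : autPP) : Prop :=
  \det (aA a) != 0 /\ \det (aB a) != 0 /\
  forall x : pt, is_pt x -> pteq (act a (sigma x)) (sigma (act a x)).

End QL.

Definition fixed_field_perfect (L : fieldType) (g : L -> L) : Prop :=
  forall p : nat, p \in [pchar L] ->
    forall a : L, g a = a -> exists b : L, g b = b /\ b ^+ p = a.

From HB Require Import structures.
From mathcomp Require Import all_boot all_order all_algebra.
From mathcomp Require Import ring.
Import GRing.Theory.
Local Open Scope ring_scope.
Set Implicit Arguments. Unset Strict Implicit.

(* Both statements are linear algebra over L.  Two points u, w of P^1_L that
   are distinct are sent to [1:0] and [0:1] by the matrix F with rows
   (w.2, -w.1) and (-u.2, u.1).  For any invertible A, the pair (A, A^g)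
   commutes with the twisted Galois action, hence is a k-automorphism of Q^L.
   Take A = F for u = first component of p (resp. r) and w = first component
   of its conjugate (resp. of s): the second components are then forced into
   place, since they are the g-conjugates of first components. *)

Section ProjectiveLine.
Variable L : fieldType.
Implicit Types u v w z : vec2 L.

Lemma peq_refl u : peq u u.
Proof. by rewrite /peq mulrC. Qed.

Lemma peq_sym u v : peq u v = peq v u.
Proof. by rewrite /peq eq_sym mulrC [v.2 * _]mulrC. Qed.

Definition frame_mx u w : 'M[L]_2 :=
  \matrix_(i < 2, j < 2)
    if i == ord0 then (if j == ord0 then w.2 else - w.1)
    else (if j == ord0 then - u.2 else u.1).

Lemma det_frame_mx u w : \det (frame_mx u w) = u.1 * w.2 - u.2 * w.1.
Proof.
rewrite (expand_det_row _ ord0) !big_ord_recl big_ord0 /cofactor !det_mx11.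
rewrite !mxE /= /bump /= expr0 expr1; ring.
Qed.

Lemma frame_mx_unit u w : ~~ peq u w -> \det (frame_mx u w) != 0.
Proof. by rewrite det_frame_mx subr_eq0. Qed.

Lemma mxapp_frame_mx u w z :
  mxapp (frame_mx u w) z = (w.2 * z.1 - w.1 * z.2, u.1 * z.2 - u.2 * z.1).
Proof. by rewrite /mxapp !mxE /= !mulNr [- _ + _]addrC. Qed.

Lemma peq_frame_e0 u w z : peq (mxapp (frame_mx u w) z) (e0 L) = peq u z.
Proof. by rewrite mxapp_frame_mx /peq /= mulr0 mulr1 eq_sym subr_eq0. Qed.

Lemma peq_frame_e1 u w z : peq (mxapp (frame_mx u w) z) (e1 L) = peq w z.
Proof.
by rewrite mxapp_frame_mx /peq /= mulr0 mulr1 subr_eq0 eq_sym.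
Qed.

End ProjectiveLine.

Section TwistedForm.
Variables (L : fieldType) (g : {rmorphism L -> L}).
Hypothesis g_invol : involutive g.
Implicit Types (u v z : vec2 L) (x : pt L).

Lemma vconjK : involutive (vconj g).
Proof. by case=> a b; rewrite /vconj /= !g_invol. Qed.

Lemma peq_vconj u v : peq (vconj g u) (vconj g v) = peq u v.
Proof. by rewrite /peq /= -!rmorphM (inj_eq (can_inj g_invol)). Qed.

Lemma vconj_e0 : vconj g (e0 L) = e0 L.
Proof. by rewrite /vconj /= rmorph0 rmorph1. Qed.

Lemma vconj_e1 : vconj g (e1 L) = e1 L.
Proof. by rewrite /vconj /= rmorph0 rmorph1. Qed.

Lemma mxapp_map_mx (A : 'M[L]_2) z :
  mxapp (map_mx g A) z = vconj g (mxapp A (vconj g z)).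
Proof. by rewrite /mxapp /vconj /= !mxE !rmorphD !rmorphM !g_invol. Qed.

Lemma peq_conj_frame_e0 u w z :
  peq (mxapp (map_mx g (frame_mx u w)) z) (e0 L) = peq u (vconj g z).
Proof. by rewrite mxapp_map_mx -vconj_e0 peq_vconj peq_frame_e0. Qed.

Lemma peq_conj_frame_e1 u w z :
  peq (mxapp (map_mx g (frame_mx u w)) z) (e1 L) = peq w (vconj g z).
Proof. by rewrite mxapp_map_mx -vconj_e1 peq_vconj peq_frame_e1. Qed.

Definition conj_aut (A : 'M[L]_2) : autPP L := AutPP A (map_mx g A) false.

Lemma act_conj_aut_sigma A x :
  act (conj_aut A) (sigma g x) = sigma g (act (conj_aut A) x).
Proof. by rewrite /act /sigma /= !mxapp_map_mx !vconjK. Qed.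

Lemma conj_aut_kaut A : \det A != 0 -> is_kaut g (conj_aut A).
Proof.
move=> detA; split=> //; split; first by rewrite det_map_mx fmorph_eq0.
by move=> x _; rewrite act_conj_aut_sigma /pteq !peq_refl.
Qed.

End TwistedForm.

Theorem lemma3p6 (L : fieldType) (g : {rmorphism L -> L})
  (g_invol : forall z : L, g (g z) = z)
  (g_nontriv : exists z : L, g z != z)
  (k_perfect : fixed_field_perfect g) :
  (* (1) degree 2 point {x, sigma x}, components not on a common ruling,
         splitting field L (components have coordinates in L, x <> sigma x) *)
  (forall x : pt L, is_pt x ->
     ~~ pteq (sigma g x) x ->
     ~~ peq x.1 (sigma g x).1 -> ~~ peq x.2 (sigma g x).2 ->
     exists a : autPP L, is_kaut g a /\
       ((pteq (act a x) (e0 L, e1 L) && pteq (act a (sigma g x)) (e1 L, e0 L))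
        || (pteq (act a x) (e1 L, e0 L) && pteq (act a (sigma g x)) (e0 L, e1 L))))
  /\
  (* (2) two rational points not on a common ruling *)
  (forall r s : pt L, is_pt r -> is_pt s ->
     pteq (sigma g r) r -> pteq (sigma g s) s ->
     ~~ peq r.1 s.1 -> ~~ peq r.2 s.2 ->
     exists a : autPP L, is_kaut g a /\
       pteq (act a r) (e0 L, e0 L) /\ pteq (act a s) (e1 L, e1 L)).
Proof.
split.
- move=> x _ _ x_sx _.
  exists (conj_aut g (frame_mx x.1 (sigma g x).1)).
  split; first exact/conj_aut_kaut/frame_mx_unit.
  apply/orP; left.
  rewrite /pteq /act /= peq_frame_e0 peq_frame_e1.
  rewrite !peq_conj_frame_e0 // !peq_conj_frame_e1 // vconjK //.
  by rewrite !peq_refl.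
- move=> r s _ _ /andP[r_rat _] /andP[s_rat _] r_s _.
  exists (conj_aut g (frame_mx r.1 s.1)).
  split; first exact/conj_aut_kaut/frame_mx_unit.
  rewrite /pteq /act /= peq_frame_e0 peq_frame_e1.
  rewrite peq_conj_frame_e0 // peq_conj_frame_e1 //.
  by rewrite !peq_refl peq_sym r_rat peq_sym s_rat.
Qed.
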